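(* In the setting described in the context, assume the following stable recovery property holds: there exist $C>0$ and $\delta>0$ such that for any $\mathcal{S}\in\mathfrak{M}$, any $\overline{\mathbf{h}}\in\mathbb{R}^{S\times K}_{\mathcal{S}}$, any $X=\mathcal{A}P(\overline{\mathbf{h}})+e$ with $\|e\|\le\delta$, and any $\mathcal{S}^*\in\mathfrak{M}$ and $\mathbf{h}^*\in\mathbb{R}^{S\times K}_{\mathcal{S}^*}$ such that $\|\mathcal{A}P(\mathbf{h}^* )-X\|\le\|e\|$, we have $$d_2([\mathbf{h}^*],[\overline{\mathbf{h}}])\le C\min\left(\|P(\overline{\mathbf{h}})\|_\infty^{\frac1K-1},\|P(\mathbf{h}^* )\|_\infty^{\frac1K-1}\right)\|e\|.$$ Then $\mathcal{A}$ satisfies the Deep-$\mathfrak{M}$-Null Space Property with constants $$\gamma=C\,S^{\frac{K-1}{2}}\sqrt{K}\,\sigma_{max}\qquad\text{and}\qquad\rho=\delta,$$ where $\sigma_{max}$ is the spectral radius of $\mathcal{A}$ (its largest singular value, so that $\|\mathcal{A}T\|\le\sigma_{max}\|T\|$ for all $T$).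
   Context: Let $K,S\ge 1$ and $m_1,\dots,m_{K+1}$ be positive integers, $\mathbb{N}_S=\{1,\dots,S\}$, and for $k=1,\dots,K$ let $M_k:\mathbb{R}^S\to\mathbb{R}^{m_k\times m_{k+1}}$ be linear. Parameters are $\mathbf{h}=(\mathbf{h}_1,\dots,\mathbf{h}_K)\in\mathbb{R}^{S\times K}$, $\mathbf{h}_k\in\mathbb{R}^S$ with entries $\mathbf{h}_{k,i}$. $\mathbb{R}^{S^K}$ is the space of real order-$K$ tensors with all axes of size $S$, indexed by $\mathbf{i}\in\mathbb{N}_S^K$; $\|\cdot\|$ is the Euclidean norm and $\|\cdot\|_p$ the entrywise $\ell^p$ norm. Segre embedding: $P(\mathbf{h})_{\mathbf{i}}=\mathbf{h}_{1,\mathbf{i}_1}\cdots\mathbf{h}_{K,\mathbf{i}_K}$. The lifting operator $\mathcal{A}:\mathbb{R}^{S^K}\to\mathbb{R}^{m_1\times m_{K+1}}$ is the unique linear map with $\mathcal{A}P(\mathbf{h})=M_1(\mathbf{h}_1)\cdots M_K(\mathbf{h}_K)$ for all $\mathbf{h}$; matrices carry the Frobenius norm. A support is $\mathcal{S}=(\mathcal{S}_1,\dots,\mathcal{S}_K)$, $\mathcal{S}_k\subset\mathbb{N}_S$; unions are componentwise; $\mathbf{i}\in\mathcal{S}$ means $\mathbf{i}_k\in\mathcal{S}_k$ for all $k$. $\mathbb{R}^{S\times K}_{\mathcal{S}}=\{\mathbf{h}:\mathbf{h}_{k,i}=0\text{ whenever }i\notin\mathcal{S}_k\}$, $\mathbb{T}_{\mathcal{S}}=\{T: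 T_{\mathbf{i}}=0\text{ whenever }\mathbf{i}\notin\mathcal{S}\}$, $P_{\mathcal{S}}$ the orthogonal projection onto $\mathbb{T}_{\mathcal{S}}$, $\mathcal{A}_{\mathcal{S}}=\mathcal{A}P_{\mathcal{S}}$. $\mathfrak{M}$ is a given finite family of supports. Deep-$\mathfrak{M}$-Null Space Property with constants $(\gamma,\rho)$, $\gamma\ge1,\rho>0$: for all $\mathcal{S},\mathcal{S}'\in\mathfrak{M}$, every $T\in P(\mathbb{R}^{S\times K}_{\mathcal{S}})+P(\mathbb{R}^{S\times K}_{\mathcal{S}'})$ with $\|\mathcal{A}_{\mathcal{S}\cup\mathcal{S}'}T\|\le\rho$ and every $T'\in\ker\mathcal{A}_{\mathcal{S}\cup\mathcal{S}'}$ satisfy $\|T\|\le\gamma\|T-P_{\mathcal{S}\cup\mathcal{S}'}T'\|$. Metric $d_p$: let $\mathbb{R}^{S\times K}_*=\{\mathbf{h}:\mathbf{h}_k\ne0\ \forall k\}$; $\mathbf{h}\sim\mathbf{g}$ iff there are $\lambda_1,\dots,\lambda_K$ with $\prod_k\lambda_k=1$ and $\mathbf{h}_k=\lambda_k\mathbf{g}_k$ for all $k$; $[\mathbf{h}]$ is the class of $\mathbf{h}$. With $\mathbb{R}^{S\times K}_{diag}=\{\mathbf{h}\in\mathbb{R}^{S\times K}_*:\|\mathbf{h}_k\|_\infty=\|\mathbf{h}_1\|_\infty\ \forall k\}$, $d_p([\mathbf{h}],[\mathbf{g}])=\inf\{\|\mathbf{h}'-\mathbf{g}'\|_p:\mathbf{h}'\in[\mathbf{h}]\cap\mathbb{R}^{S\times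 K}_{diag},\ \mathbf{g}'\in[\mathbf{g}]\cap\mathbb{R}^{S\times K}_{diag}\}$ for $\mathbf{h},\mathbf{g}\in\mathbb{R}^{S\times K}_*$. *)

From HB Require Import structures.
From mathcomp Require Import all_boot all_order all_algebra.
From mathcomp Require Import all_classical all_reals exp.
Set Implicit Arguments. Unset Strict Implicit. Unset Printing Implicit Defensive.
Import Order.TTheory GRing.Theory Num.Theory.
Local Open Scope ring_scope.
Local Open Scope classical_set_scope.


Notation param R S K := 'M[R]_(S, K).
Notation midx S K := {ffun 'I_K -> 'I_S}.
Notation tensor R S K := {ffun {ffun 'I_K -> 'I_S} -> R^o}.
Notation suppT S K := {ffun 'I_K -> {set 'I_S}}.

Section Defs.
Variables (R : realType) (S K : nat).
Local Notation param := (param R S K).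
Local Notation midx := (midx S K).
Local Notation tensor := (tensor R S K).
Local Notation suppT := (suppT S K).


Definition segre (h : param) : tensor :=
  [ffun i : midx => \prod_(k < K) h (i k) k].

Definition tnorm (T : tensor) : R := Num.sqrt (\sum_(i : midx) T i ^+ 2).
Definition tnorm_inf (T : tensor) : R := \big[Order.max/0]_(i : midx) `|T i|.
Definition pnorm2 (h : param) : R := Num.sqrt (\sum_(i < S) \sum_(k < K) h i k ^+ 2).
Definition colnorm_inf (h : param) (k : 'I_K) : R := \big[Order.max/0]_(i < S) `|h i k|.

Definition supp_union (s s' : suppT) : suppT := [ffun k => s k :|: s' k].
Definition in_supp (i : midx) (s : suppT) : bool := [forall k, i k \in s k].
Definition param_on (s : suppT) (h : param) : Prop :=
  forall k i, i \notin s k -> h i k = 0.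
Definition proj_supp (s : suppT) (T : tensor) : tensor :=
  [ffun i => if in_supp i s then T i else 0].

Definition param_star (h : param) : Prop := forall k : 'I_K, exists i : 'I_S, h i k != 0.
Definition param_equiv (h g : param) : Prop :=
  exists lam : 'I_K -> R, \prod_(k < K) lam k = 1 /\ forall i k, h i k = lam k * g i k.
Definition param_diag (h : param) : Prop :=
  param_star h /\ forall k l, colnorm_inf h k = colnorm_inf h l.
Definition d2 (h g : param) : R :=
  inf [set r : R | exists h' g' : param,
           [/\ param_equiv h' h, param_diag h', param_equiv g' g, param_diag g'
              & r = pnorm2 (h' - g')]].


End Defs.

Section Lift.
Variables (R : realType) (S K : nat) (m : nat -> nat).

Definition frob (p q : nat) (X : 'M[R]_(p, q)) : R :=
  Num.sqrt (\sum_(i < p) \sum_(j < q) X i j ^+ 2).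

(* column h_k as a vector of R^S (zero if k >= K, never used) *)
Definition hcol (h : param R S K) (k : nat) : 'rV[R]_S :=
  \row_(i < S) (match @insub _ (fun k => k < K)%N 'I_K k with Some o => h i o | None => 0 end).

(* M_1(h_1) ... M_n(h_n), with M_{k+1} = M k (0-based) *)
Fixpoint chain (M : forall k : nat, {linear 'rV[R]_S -> 'M[R]_(m k, m k.+1)})
  (h : param R S K) (n : nat) : 'M[R]_(m 0, m n) :=
  match n return 'M[R]_(m 0, m n) with
  | 0 => 1%:M
  | n'.+1 => chain M h n' *m M n' (hcol h n')
  end.

Definition sigma_max (A : {linear tensor R S K -> 'M[R]_(m 0, m K)}) : R :=
  sup [set r : R | exists T : tensor R S K, tnorm T <= 1 /\ r = frob (A T)].

Definition deep_NSP (A : {linear tensor R S K -> 'M[R]_(m 0, m K)})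
  (Mf : {set suppT S K}) (gamma rho : R) : Prop :=
  forall s s', s \in Mf -> s' \in Mf ->
  forall T : tensor R S K,
    (exists h g : param R S K, param_on s h /\ param_on s' g /\ T = segre h + segre g) ->
    frob (A (proj_supp (supp_union s s') T)) <= rho ->
    forall T' : tensor R S K, A (proj_supp (supp_union s s') T') = 0 ->
    tnorm T <= gamma * tnorm (T - proj_supp (supp_union s s') T').

Definition stable_recovery (A : {linear tensor R S K -> 'M[R]_(m 0, m K)})
  (Mf : {set suppT S K}) (C delta : R) : Prop :=
  forall s, s \in Mf -> forall hbar : param R S K, param_on s hbar -> param_star hbar ->
  forall e : 'M[R]_(m 0, m K), frob e <= delta ->
  let X := A (segre hbar) + e in
  forall s', s' \in Mf -> forall hs : param R S K, param_on s' hs -> param_star hs ->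
  frob (A (segre hs) - X) <= frob e ->
  d2 hs hbar <= C * Order.min (powR (tnorm_inf (segre hbar)) (K%:R^-1 - 1))
                              (powR (tnorm_inf (segre hs)) (K%:R^-1 - 1)) * frob e.

End Lift.

(* Write T = P(h) + P(g) as P(h) - P(g~), where g~ is g with its first column
   negated, and apply stable recovery with ground truth g~, noise e = A T and
   candidate h, which fits X = A P(g~) + e exactly.  The bound on d_2([h],[g~])
   becomes a bound on ||T|| because P is Lipschitz on diagonal representatives:
   telescoping the product over the columns gives
   ||P(h') - P(g')|| <= sqrt K (sqrt S c)^(K-1) ||h' - g'|| when all entries are
   bounded by c, and on a diagonal representative c^K <= ||P(h')||_oo, which
   cancels the factor ||P||_oo^(1/K-1).  Then ||A T|| = ||A (T - P_{S u S'} T')||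
   <= sigma_max ||T - P_{S u S'} T'||.  A parameter with a zero column has
   P = 0, and a single remaining term P(h) is written as P(h2) - P(h), where
   h2 is h with its first column doubled. *)

From HB Require Import structures.
From mathcomp Require Import all_boot all_order all_algebra.
From mathcomp Require Import all_classical all_reals exp.
From mathcomp Require Import ring lra.
Import Order.TTheory GRing.Theory Num.Theory.
Local Open Scope ring_scope.

Lemma sqr_sum_le {R : realDomainType} {I : finType} (x : I -> R) :
  (\sum_i x i) ^+ 2 <= #|I|%:R * \sum_i x i ^+ 2.
Proof.
have sqr_sum : (\sum_i x i) ^+ 2 = \sum_i \sum_j x i * x j by rewrite expr2 big_distrlr.
have two_prod_le : 2 * (\sum_i x i) ^+ 2 <= \sum_i \sum_j (x i ^+ 2 + x j ^+ 2).
  rewrite sqr_sum mulr_sumr; apply: ler_sum => i _; rewrite mulr_sumr.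
  apply: ler_sum => j _; have := sqr_ge0 (x i - x j); rewrite sqrrB; lra.
have sum_sqr_pairs :
    \sum_i \sum_j (x i ^+ 2 + x j ^+ 2) = 2 * (#|I|%:R * \sum_i x i ^+ 2).
  under eq_bigr => i _ do rewrite big_split /= sumr_const -mulr_natl.
  rewrite big_split /= sumr_const -mulr_natl -mulr_sumr; ring.
lra.
Qed.

Lemma prodrB_telescope (R : comPzRingType) n (a b : nat -> R) :
  \prod_(j < n) a j - \prod_(j < n) b j =
  \sum_(k < n) \prod_(j < n)
     (if (j < k)%N then b j else if j == k :> nat then a j - b j else a j).
Proof.
elim: n => [|n IH]; first by rewrite !big_ord0 subrr.
rewrite big_ord_recr /= [X in _ - X]big_ord_recr [RHS]big_ord_recr /=.
rewrite [in RHS](eq_bigr (fun k : 'I_n => \prod_(j < n) (if (j < k)%N then b j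
            else if j == k :> nat then a j - b j else a j) * a n)); last first.
  move=> k _; rewrite big_ord_recr /= ltnNge (ltnW (ltn_ord k)) /=.
  by rewrite eqn_leq leqNgt ltn_ord.
rewrite -mulr_suml -IH big_ord_recr /= ltnn eqxx.
under [X in X * (a n - b n)]eq_bigr => j _ do rewrite ltn_ord.
ring.
Qed.

Section Norms.
Context {R : realType} {S K : nat}.
Local Notation tensor := (tensor R S K).

Lemma frob_ge0 {p q} (X : 'M[R]_(p, q)) : 0 <= frob X.
Proof. exact: sqrtr_ge0. Qed.

Lemma frob_sqr {p q} (X : 'M[R]_(p, q)) : frob X ^+ 2 = \sum_i \sum_j X i j ^+ 2.
Proof.
by rewrite sqr_sqrtr // !sumr_ge0 // => i _; rewrite sumr_ge0 // => j _; exact: sqr_ge0.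
Qed.

Lemma frobZ {p q} (c : R) (X : 'M[R]_(p, q)) : frob (c *: X) = `|c| * frob X.
Proof.
rewrite /frob -sqrtr_sqr -sqrtrM ?sqr_ge0 // mulr_sumr; congr Num.sqrt.
apply: eq_bigr => i _; rewrite mulr_sumr; apply: eq_bigr => j _.
by rewrite mxE exprMn.
Qed.

Lemma frob0 {p q} : frob (0 : 'M[R]_(p, q)) = 0.
Proof. by rewrite -(scale0r (0 : 'M[R]_(p, q))) frobZ normr0 mul0r. Qed.

Lemma tnorm_ge0 (T : tensor) : 0 <= tnorm T.
Proof. exact: sqrtr_ge0. Qed.

Lemma pnorm2_ge0 (h : param R S K) : 0 <= pnorm2 h.
Proof. exact: sqrtr_ge0. Qed.

Lemma tnorm_sqr (T : tensor) : tnorm T ^+ 2 = \sum_i T i ^+ 2.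
Proof. by rewrite sqr_sqrtr // sumr_ge0 // => i _; exact: sqr_ge0. Qed.

Lemma tnormZ (c : R) (T : tensor) : tnorm (c *: T) = `|c| * tnorm T.
Proof.
rewrite /tnorm -sqrtr_sqr -sqrtrM ?sqr_ge0 // mulr_sumr; congr Num.sqrt.
by apply: eq_bigr => i _; rewrite ffunE exprMn.
Qed.

Lemma tnorm0 : tnorm (0 : tensor) = 0.
Proof. by rewrite -(scale0r (0 : tensor)) tnormZ normr0 mul0r. Qed.

End Norms.

Section SegreLipschitz.
Context {R : realType} {S K' : nat}.
Local Notation K := K'.+1.
Local Notation param := (param R S K).

Definition mixcol (h g : param) (k : 'I_K) : param :=
  \matrix_(s, j) (if (j < k)%N then g s j else if j == k then h s j - g s j else h s j).

Lemma segreB_telescope (h g : param) :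
  segre h - segre g = \sum_k segre (mixcol h g k).
Proof.
apply/ffunP => i; rewrite sum_ffunE !ffunE.
pose a j := h (i (inord j)) (inord j); pose b j := g (i (inord j)) (inord j).
rewrite (eq_bigr (a \o val)) => [|j _]; last by rewrite /a /= inord_val.
rewrite [X in _ - X](eq_bigr (b \o val)) => [|j _]; last by rewrite /b /= inord_val.
rewrite prodrB_telescope; apply: eq_bigr => k _; rewrite ffunE.
apply: eq_bigr => j _; rewrite mxE /a /b inord_val.
by case: ifP => // _; case: ifP.
Qed.

Lemma tnorm_segre_sqr (w : param) :
  tnorm (segre w) ^+ 2 = \prod_(j < K) \sum_(s < S) w s j ^+ 2.
Proof.
rewrite tnorm_sqr (bigA_distr_bigA (fun j s => w s j ^+ 2)) /=.
by apply: eq_bigr => i _; rewrite ffunE prodrXl.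
Qed.

Lemma tnorm_segre_mixcol_sqr_le (h g : param) (c : R) k :
  (forall s j, `|h s j| <= c) -> (forall s j, `|g s j| <= c) ->
  tnorm (segre (mixcol h g k)) ^+ 2
    <= (S%:R * c ^+ 2) ^+ K' * \sum_(s < S) (h s k - g s k) ^+ 2.
Proof.
move=> hc gc; rewrite tnorm_segre_sqr (bigD1 k) //= mulrC.
rewrite (eq_bigr (fun s => (h s k - g s k) ^+ 2)) => [|s _]; last first.
  by rewrite mxE ltnn eqxx.
apply: ler_wpM2r; first by apply: sumr_ge0 => s _; exact: sqr_ge0.
apply: (@le_trans _ _ (\prod_(j < K | j != k) (S%:R * c ^+ 2))); last first.
  by rewrite prodr_const cardC1 card_ord.
apply: ler_prod => j jk; rewrite sumr_ge0 => [|s _]; last exact: sqr_ge0.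
apply: (@le_trans _ _ (\sum_(s < S) c ^+ 2)); last first.
  by rewrite sumr_const card_ord mulr_natl.
apply: ler_sum => s _.
have entry_le : `|mixcol h g k s j| <= c.
  by rewrite mxE (negbTE jk); case: ifP => _; [exact: gc | exact: hc].
by rewrite -real_normK ?num_real // lerXn2r ?nnegrE ?(le_trans _ entry_le).
Qed.

Lemma tnorm_segreB_sqr_le {h g : param} {c : R} :
  (forall s j, `|h s j| <= c) -> (forall s j, `|g s j| <= c) ->
  tnorm (segre h - segre g) ^+ 2
    <= K%:R * (S%:R * c ^+ 2) ^+ K' * pnorm2 (h - g) ^+ 2.
Proof.
move=> hc gc; rewrite segreB_telescope tnorm_sqr.
apply: (@le_trans _ _ (\sum_i (K%:R * \sum_k segre (mixcol h g k) i ^+ 2))).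
  apply: ler_sum => i _; rewrite sum_ffunE.
  by have := sqr_sum_le (fun k => segre (mixcol h g k) i); rewrite card_ord.
rewrite -mulr_sumr exchange_big /= -mulrA ler_wpM2l //.
rewrite sqr_sqrtr; last by do 2 (apply: sumr_ge0 => ? _); exact: sqr_ge0.
rewrite [X in _ * X]exchange_big mulr_sumr /=; apply: ler_sum => k _.
rewrite -tnorm_sqr (eq_bigr (fun s => (h s k - g s k) ^+ 2)) => [|s _]; last first.
  by rewrite !mxE.
exact: tnorm_segre_mixcol_sqr_le.
Qed.

End SegreLipschitz.

Section DiagonalRepresentatives.
Context {R : realType} {S K' : nat}.
Local Notation K := K'.+1.
Local Notation param := (param R S K).
Local Notation tensor := (tensor R S K).

Lemma colnorm_ge0 (h : param) k : 0 <= colnorm_inf h k.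
Proof. by apply: (big_ind (fun x => 0 <= x)) => // x y x0 y0; rewrite le_max x0. Qed.

Lemma ler_colnorm (h : param) i k : `|h i k| <= colnorm_inf h k.
Proof. exact: (le_bigmax 0 (fun i => `|h i k|) i). Qed.

Lemma colnorm_gt0 (h : param) k i : h i k != 0 -> 0 < colnorm_inf h k.
Proof. by move=> nz; apply: lt_le_trans (ler_colnorm h i k); rewrite normr_gt0. Qed.

Lemma tnorm_inf_ge0 (T : tensor) : 0 <= tnorm_inf T.
Proof. by apply: (big_ind (fun x => 0 <= x)) => // x y x0 y0; rewrite le_max x0. Qed.

Lemma ler_tnorm_inf (T : tensor) i : `|T i| <= tnorm_inf T.
Proof. exact: (le_bigmax 0 (fun i => `|T i|) i). Qed.

Lemma prod_colnorm_le {h : param} : param_star h ->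
  \prod_k colnorm_inf h k <= tnorm_inf (segre h).
Proof.
move=> st.
have attained k : exists i, colnorm_inf h k = `|h i k|.
  have [i0 _] := st k; exists [arg max_(i > i0) `|h i k|]%O.
  exact: (bigmax_eq_arg 0 i0 xpredT (fun i => `|h i k|)).
pose f : {ffun 'I_K -> 'I_S} := [ffun k => sval (cid (attained k))].
apply: le_trans (ler_tnorm_inf _ f); rewrite ffunE normr_prod le_eqVlt eq_sym.
by apply/orP; left; apply/eqP/eq_bigr => k _; rewrite ffunE; case: cid.
Qed.

Lemma tnorm_inf_segre_gt0 {h : param} : param_star h -> 0 < tnorm_inf (segre h).
Proof.
move=> st; apply: lt_le_trans (prod_colnorm_le st); apply: prodr_gt0 => k _.
by have [i nz] := st k; exact: colnorm_gt0 nz.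
Qed.

Lemma segre_equiv {h g : param} : param_equiv h g -> segre h = segre g.
Proof.
move=> [lam [prod_lam hlam]]; apply/ffunP => i; rewrite !ffunE.
under eq_bigr => k _ do rewrite hlam.
by rewrite big_split /= prod_lam mul1r.
Qed.

Lemma colnorm_scale (h : param) (lam : 'I_K -> R) k : 0 <= lam k ->
  colnorm_inf (\matrix_(i, j) (lam j * h i j)) k = lam k * colnorm_inf h k.
Proof.
move=> lam0; rewrite /colnorm_inf (big_morph (fun x => lam k * x)
  (id1 := 0) (op1 := Order.max) (fun x y => maxr_pMr x y lam0)) ?mulr0 //.
by apply: eq_bigr => i _; rewrite mxE normrM (ger0_norm lam0).
Qed.

(* Rescale every column to sup norm (prod_k |h_k|_oo)^(1/K). *)
Lemma exists_diag_equiv {h : param} : param_star h ->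
  exists h', param_equiv h' h /\ param_diag h'.
Proof.
move=> st.
have col_gt0 k : 0 < colnorm_inf h k by have [i nz] := st k; exact: colnorm_gt0 nz.
pose p := \prod_k colnorm_inf h k.
have p_gt0 : 0 < p by apply: prodr_gt0 => k _.
pose q := powR p K%:R^-1.
have q_gt0 : 0 < q by exact: powR_gt0.
pose lam k := q / colnorm_inf h k.
have lam_gt0 k : 0 < lam k by rewrite divr_gt0.
exists (\matrix_(i, j) (lam j * h i j)); split; [|split].
- exists lam; split; last by move=> i k; rewrite mxE.
  rewrite prodf_div prodr_const card_ord -powR_mulrn ?(ltW q_gt0) //.
  rewrite -powRrM mulVf ?pnatr_eq0 // powRr1 ?(ltW p_gt0) // divff //.
  exact: lt0r_neq0.
- move=> k; have [i nz] := st k; exists i.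
  by rewrite mxE mulf_neq0 // lt0r_neq0.
- move=> k l; rewrite !colnorm_scale ?(ltW (lam_gt0 _)) // !divfK //;
  exact: lt0r_neq0.
Qed.

Lemma diag_colnorm_le {h : param} {M : R} : param_diag h ->
  tnorm_inf (segre h) <= M -> colnorm_inf h ord0 <= powR M K%:R^-1.
Proof.
move=> [st same_col] hM; set a := colnorm_inf h ord0.
have a0 : 0 <= a by exact: colnorm_ge0.
have aK_le : a ^+ K <= M.
  apply: le_trans hM; apply: le_trans (prod_colnorm_le st).
  rewrite (eq_bigr (fun=> a)) ?prodr_const ?card_ord // => k _.
  by rewrite /a (same_col k ord0).
have -> : a = powR (a ^+ K) K%:R^-1.
  by rewrite -powR_mulrn // -powRrM mulfV ?powRr1 // pnatr_eq0.
apply: ge0_ler_powR; rewrite ?invr_ge0 // nnegrE ?exprn_ge0 //.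
by rewrite (le_trans _ aK_le) ?exprn_ge0.
Qed.

End DiagonalRepresentatives.

Section SegreDistance.
Context {R : realType} {S K' : nat}.
Local Notation K := K'.+1.
Local Notation param := (param R S K).

Lemma tnorm_segreB_diag_le {h g : param} {M : R} :
  param_diag h -> param_diag g ->
  tnorm_inf (segre h) <= M -> tnorm_inf (segre g) <= M ->
  tnorm (segre h - segre g) <= Num.sqrt K%:R * powR S%:R (K'%:R / 2)
                               * powR M (K'%:R / K%:R) * pnorm2 (h - g).
Proof.
move=> dh dg hM gM.
set c := Order.max (colnorm_inf h ord0) (colnorm_inf g ord0).
have c0 : 0 <= c by rewrite le_max colnorm_ge0.
have hc s j : `|h s j| <= c.
  by apply: le_trans (ler_colnorm h s j) _; rewrite (dh.2 j ord0) le_max lexx.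
have gc s j : `|g s j| <= c.
  by apply: le_trans (ler_colnorm g s j) _; rewrite (dg.2 j ord0) le_max lexx orbT.
have cK'_le : c ^+ K' <= powR M (K'%:R / K%:R).
  have M0 : 0 <= M := le_trans (tnorm_inf_ge0 _) hM.
  rewrite mulrC powRrM powR_mulrn ?powR_ge0 // lerXn2r ?nnegrE ?powR_ge0 //.
  by rewrite ge_max !diag_colnorm_le.
have Sp_sqr : powR S%:R (K'%:R / 2) ^+ 2 = S%:R ^+ K' :> R.
  by rewrite -powR_mulrn ?powR_ge0 // -powRrM mulfVK ?pnatr_eq0 // powR_mulrn.
rewrite -(@ler_pXn2r _ 2) // ?nnegrE ?tnorm_ge0 ?mulr_ge0 ?sqrtr_ge0 ?powR_ge0 //.
apply: le_trans (tnorm_segreB_sqr_le hc gc) _.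
rewrite !exprMn Sp_sqr (sqr_sqrtr (ler0n _ K)) -[c ^+ K' * _]expr2 -!mulrA.
rewrite ler_wpM2l // ler_wpM2l ?exprn_ge0 //.
apply: ler_pM; rewrite ?mulr_ge0 ?pnorm2_ge0 ?exprn_ge0 //.
by apply: ler_wpM2r; rewrite ?sqr_ge0.
Qed.

Lemma tnorm_segreB_le_d2 {h g : param} : param_star h -> param_star g ->
  tnorm (segre h - segre g) <= Num.sqrt K%:R * powR S%:R (K'%:R / 2)
    * powR (Order.max (tnorm_inf (segre h)) (tnorm_inf (segre g))) (K'%:R / K%:R)
    * d2 h g.
Proof.
move=> sth stg; set M := Order.max _ _; set D := _ * _ * powR M _.
have S_pos : (0 < S)%N.
  by have [i _] := sth ord0; exact: leq_ltn_trans (leq0n i) (ltn_ord i).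
have M_gt0 : 0 < M by rewrite lt_max tnorm_inf_segre_gt0.
have D_gt0 : 0 < D by rewrite !mulr_gt0 ?sqrtr_gt0 ?ltr0n ?powR_gt0 ?ltr0n.
rewrite mulrC -ler_pdivrMr //; apply: lb_le_inf.
  have [h' [eh dh]] := exists_diag_equiv sth.
  have [g' [eg dg]] := exists_diag_equiv stg.
  by exists (pnorm2 (h' - g')), h', g'.
move=> _ [h' [g' [eh dh eg dg ->]]].
rewrite ler_pdivrMr // mulrC -(segre_equiv eh) -(segre_equiv eg).
by apply: tnorm_segreB_diag_le;
  rewrite ?(segre_equiv eh) ?(segre_equiv eg) // le_max lexx ?orbT.
Qed.

Lemma tnorm_segreB_le {h g : param} {C e : R} : 0 <= C -> 0 <= e ->
  param_star h -> param_star g ->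
  d2 h g <= C * Order.min (powR (tnorm_inf (segre g)) (K%:R^-1 - 1))
                          (powR (tnorm_inf (segre h)) (K%:R^-1 - 1)) * e ->
  tnorm (segre h - segre g) <= C * powR S%:R (K'%:R / 2) * Num.sqrt K%:R * e.
Proof.
move=> C0 e0 sth stg hd.
set M := Order.max (tnorm_inf (segre h)) (tnorm_inf (segre g)).
have M_gt0 : 0 < M by rewrite lt_max tnorm_inf_segre_gt0.
have min_le : Order.min (powR (tnorm_inf (segre g)) (K%:R^-1 - 1))
    (powR (tnorm_inf (segre h)) (K%:R^-1 - 1)) <= powR M (K%:R^-1 - 1).
  by rewrite /M; case: (leP (tnorm_inf (segre h)) (tnorm_inf (segre g))) => _;
    rewrite ge_min lexx ?orbT.
have exponents_cancel : (K'%:R / K%:R + (K%:R^-1 - 1) : R) = 0.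
  by rewrite -natr1; field; rewrite natr1 pnatr_eq0.
have powR_cancel : powR M (K'%:R / K%:R) * powR M (K%:R^-1 - 1) = 1.
  by rewrite -powRD ?exponents_cancel ?powRr0 // eqxx gt_eqF.
apply: le_trans (tnorm_segreB_le_d2 sth stg) _.
apply: le_trans (ler_wpM2l _ (le_trans hd (ler_wpM2r e0 (ler_wpM2l C0 min_le)))) _.
  by rewrite !mulr_ge0 ?sqrtr_ge0 ?powR_ge0.
rewrite -/M le_eqVlt; apply/orP; left; apply/eqP.
transitivity (C * powR S%:R (K'%:R / 2) * Num.sqrt K%:R * e
               * (powR M (K'%:R / K%:R) * powR M (K%:R^-1 - 1))); first ring.
by rewrite powR_cancel mulr1.
Qed.

End SegreDistance.

Section OperatorNorm.
Context {R : realType} {S K : nat} {m : nat -> nat}.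
Local Notation tensor := (tensor R S K).
Variable A : {linear tensor -> 'M[R]_(m 0, m K)}.

Definition tensor_unit (i : midx S K) : tensor := [ffun j => (i == j)%:R].

Lemma tensor_unit_expansion (T : tensor) : T = \sum_i T i *: tensor_unit i.
Proof.
apply/ffunP => j; rewrite sum_ffunE (bigD1 j) //= big1 => [|i ij].
  by rewrite !ffunE eqxx addr0; symmetry; exact: mulr1.
by rewrite !ffunE (negbTE ij); exact: mulr0.
Qed.

Lemma linear_frob_sqr_bounded :
  exists2 W, 0 <= W & forall T, frob (A T) ^+ 2 <= W * tnorm T ^+ 2.
Proof.
set N : R := #|{: midx S K}|%:R.
set W := \sum_i frob (A (tensor_unit i)) ^+ 2.
exists (N * W); first by rewrite mulr_ge0 ?ler0n // sumr_ge0 // => i _; exact: sqr_ge0.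
move=> T; rewrite frob_sqr {1}(tensor_unit_expansion T) linear_sum.
apply: (@le_trans _ _
    (\sum_p \sum_q (N * \sum_i (T i * A (tensor_unit i) p q) ^+ 2))).
  apply: ler_sum => p _; apply: ler_sum => q _.
  rewrite summxE; under eq_bigr => i _ do rewrite linearZ mxE.
  exact: sqr_sum_le.
rewrite tnorm_sqr; under eq_bigr => p _ do rewrite -mulr_sumr.
rewrite -mulr_sumr -mulrA ler_wpM2l ?ler0n //.
under eq_bigr => p _ do rewrite exchange_big /=.
rewrite exchange_big /= mulr_sumr; apply: ler_sum => i _.
have -> : \sum_p \sum_q (T i * A (tensor_unit i) p q) ^+ 2
          = T i ^+ 2 * frob (A (tensor_unit i)) ^+ 2.
  rewrite frob_sqr mulr_sumr; apply: eq_bigr => p _; rewrite mulr_sumr.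
  by apply: eq_bigr => q _; rewrite exprMn.
rewrite mulrC ler_wpM2r ?sqr_ge0 // /W (bigD1 i) //= lerDl.
by apply: sumr_ge0 => j _; exact: sqr_ge0.
Qed.

Lemma frob_le_sigma_max (T : tensor) : frob (A T) <= sigma_max A * tnorm T.
Proof.
have [W W0 AW] := linear_frob_sqr_bounded.
have in_unit_ball T1 : tnorm T1 <= 1 -> frob (A T1) <= sigma_max A.
  move=> T1_le1; apply: ub_le_sup; last by exists T1.
  exists (Num.sqrt W) => _ [T2 [T2_le1 ->]].
  rewrite -[frob _]ger0_norm ?frob_ge0 // -sqrtr_sqr ler_sqrt //.
  apply: le_trans (AW T2) (ler_piMr W0 _).
  by rewrite expr_le1 ?tnorm_ge0.
have [T_gt0|] := ltrP 0 (tnorm T).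
  have := in_unit_ball ((tnorm T)^-1 *: T).
  rewrite tnormZ linearZ frobZ ger0_norm ?invr_ge0 ?tnorm_ge0 // mulVf ?gt_eqF //.
  by rewrite lexx ler_pdivrMl // mulrC => /(_ isT).
rewrite le_eqVlt ltNge tnorm_ge0 orbF => /eqP T0.
have := AW T; have := frob_ge0 (A T); rewrite T0 expr0n /= !mulr0; nra.
Qed.

End OperatorNorm.

Section SupportsAndScaling.
Context {R : realType} {S K' : nat}.
Local Notation K := K'.+1.
Local Notation param := (param R S K).
Local Notation tensor := (tensor R S K).

Lemma segre_nonstar {h : param} : ~ param_star h -> segre h = 0.
Proof.
move=> nst; apply/ffunP => i; rewrite !ffunE; apply/eqP; apply: contraT => nz.
by exfalso; apply: nst => k; exists (i k); move/prodf_neq0: nz; apply.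
Qed.

Lemma proj_supp_segre (s s' : suppT S K) (h : param) :
  param_on s h \/ param_on s' h -> proj_supp (supp_union s s') (segre h) = segre h.
Proof.
move=> hon; apply/ffunP => i; rewrite !ffunE; case: ifP => // /negbT.
rewrite negb_forall => /existsP [k]; rewrite ffunE inE negb_or => /andP [ns ns'].
by apply/esym/eqP/prodf_eq0; exists k => //; case: hon => ->.
Qed.

Lemma proj_suppD (s : suppT S K) (X Y : tensor) :
  proj_supp s (X + Y) = proj_supp s X + proj_supp s Y.
Proof. by apply/ffunP => i; rewrite !ffunE; case: ifP; rewrite ?addr0. Qed.

Definition scale_col0 (h : param) (c : R) : param :=
  \matrix_(i, k) (if k == ord0 then c * h i k else h i k).

Lemma segre_scale_col0 (h : param) c : segre (scale_col0 h c) = c *: segre h.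
Proof.
apply/ffunP => i; rewrite !ffunE (bigD1 ord0) //= [in RHS](bigD1 ord0) //= mxE eqxx.
rewrite -mulrA; congr (_ * (_ * _)).
by apply: eq_bigr => k /negbTE nk; rewrite mxE nk.
Qed.

Lemma param_on_scale_col0 {s} {h : param} (c : R) :
  param_on s h -> param_on s (scale_col0 h c).
Proof. by move=> hon k i ni; rewrite mxE hon // mulr0; case: ifP. Qed.

Lemma param_star_scale_col0 {h : param} {c : R} :
  c != 0 -> param_star h -> param_star (scale_col0 h c).
Proof.
move=> c0 st k; have [i nz] := st k; exists i; rewrite mxE.
by case: ifP => // _; rewrite mulf_neq0.
Qed.

End SupportsAndScaling.

Section NullSpaceProperty.
Context {R : realType} {S K' : nat} {m : nat -> nat}.
Local Notation K := K'.+1.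
Local Notation param := (param R S K).
Variables (A : {linear tensor R S K -> 'M[R]_(m 0, m K)}) (Mf : {set suppT S K}).
Variables (C delta : R).
Hypotheses (C_ge0 : 0 <= C) (recovery : stable_recovery A Mf C delta).
Local Notation L := (C * powR S%:R (K'%:R / 2) * Num.sqrt K%:R).

Lemma stable_recovery_segreB {s s'} {g h : param} :
  s \in Mf -> s' \in Mf -> param_on s g -> param_star g ->
  param_on s' h -> param_star h ->
  frob (A (segre h - segre g)) <= delta ->
  tnorm (segre h - segre g) <= L * frob (A (segre h - segre g)).
Proof.
move=> sM s'M gon gst hon hst small.
apply: tnorm_segreB_le => //; first exact: frob_ge0.
apply: (recovery _ sM _ gon gst _ small _ s'M _ hon hst).
by rewrite linearB [A (segre g) + _]addrC subrK subrr frob0 frob_ge0.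
Qed.

Lemma stable_recovery_segre {s} {h : param} :
  s \in Mf -> param_on s h -> param_star h -> frob (A (segre h)) <= delta ->
  tnorm (segre h) <= L * frob (A (segre h)).
Proof.
move=> sM hon hst.
have -> : segre h = segre (scale_col0 h 2) - segre h.
  by rewrite segre_scale_col0 scaler_nat mulr2n addrK.
apply: (stable_recovery_segreB sM sM hon hst (param_on_scale_col0 _ hon)).
by apply: param_star_scale_col0 hst; rewrite pnatr_eq0.
Qed.

Lemma deep_NSP_of_stable_recovery : deep_NSP A Mf (L * sigma_max A) delta.
Proof.
move=> s s' sM s'M _ [h [g [hon [gon ->]]]] small T' T'_ker.
rewrite proj_suppD !proj_supp_segre in small; [|by right|by left].
have L_ge0 : 0 <= L by rewrite !mulr_ge0 ?powR_ge0 ?sqrtr_ge0.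
apply: (@le_trans _ _ (L * frob (A (segre h + segre g)))); last first.
  rewrite -[X in _ <= X]mulrA ler_wpM2l //.
  by rewrite -[A (segre h + segre g)]subr0 -T'_ker -linearB frob_le_sigma_max.
case: (pselect (param_star h)) => hst; case: (pselect (param_star g)) => gst.
- have g_neg : segre h + segre g = segre h - segre (scale_col0 g (-1)).
    by rewrite segre_scale_col0 scaleN1r opprK.
  rewrite g_neg in small *.
  apply: (stable_recovery_segreB s'M sM (param_on_scale_col0 _ gon) _ hon hst small).
  by apply: param_star_scale_col0 gst; rewrite oppr_eq0 oner_eq0.
- rewrite (segre_nonstar gst) addr0 in small *.
  exact: stable_recovery_segre sM hon hst small.
- rewrite (segre_nonstar hst) add0r in small *.
  exact: stable_recovery_segre s'M gon gst small.
- by rewrite (segre_nonstar hst) (segre_nonstar gst) addr0 tnorm0 mulr_ge0 ?frob_ge0.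
Qed.

End NullSpaceProperty.

Theorem theorem4 (R : realType) (K S : nat) (m : nat -> nat)
  (M : forall k : nat, {linear 'rV[R]_S -> 'M[R]_(m k, m k.+1)})
  (A : {linear tensor R S K -> 'M[R]_(m 0, m K)})
  (Mf : {set suppT S K}) (C delta : R) :
  (1 <= K)%N -> (1 <= S)%N -> (forall k, (k <= K)%N -> (0 < m k)%N) ->
  (forall h : param R S K, A (segre h) = chain M h K) ->
  0 < C -> 0 < delta ->
  stable_recovery A Mf C delta ->
  deep_NSP A Mf
    (C * powR (S%:R) ((K%:R - 1) / 2) * Num.sqrt (K%:R) * sigma_max A) delta.
Proof.
case: K M A Mf => [//|K'] M A Mf _ _ _ _ C_gt0 _ recovery.
have -> : (K'.+1%:R - 1 : R) = K'%:R by rewrite -natr1 addrK.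
exact: deep_NSP_of_stable_recovery (ltW C_gt0) recovery.
Qed.
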